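(* Let $r\geq 2$ and let $X$ be a rose with $r$ petals, with $F\cong\pi_1(X,x_0)$ the free group on the generators $\alpha_1,\ldots,\alpha_r$ corresponding to the oriented petals. Let $Z$ be a finite, non-empty, connected graph and let $Z\to X$ be an immersion that is not a covering map. Then the immersion factors as $Z\hookrightarrow Y\to X$, where $Z$ is a subgraph of $Y$, $Y$ is a finite connected graph, $Y\to X$ is a finite-sheeted (combinatorial) covering map, and the image of the resulting homomorphism $F\to\mathrm{Sym}(V(Y))$ (given by the action of $F$ on the vertex set $V(Y)$ of $Y$ by path lifting) is the full symmetric group $\mathrm{Sym}(V(Y))$.
   Context: A rose with $r$ petals is a graph with exactly one vertex $x_0$ and $r$ edges; each edge is oriented and labelled by a generator $\alpha_i$, giving $\pi_1(X,x_0)\cong F$ free on $\alpha_1,\dots,\alpha_r$. A combinatorial map of graphs $Y\to X$ (sending vertices to vertices and edges to edges) is equivalent to an orientation and labelling of the edges of $Y$ by $\alpha_1,\ldots,\alpha_r$. It is an immersion if it is injective on links of vertices, equivalently if at every vertex of $Y$ and for every label $\alpha_i$ there is at most one incoming and at most one outgoing edge labelled $\alpha_i$; it is a covering map if it is bijective on links of vertices, equivalently if at every vertex there is exactly one incoming and exactly one outgoing edge labelled $\alpha_i$ for each $i$. For a covering $Y\to X$, $F$ acts on the vertices of $Y$ by path lifting: for a vertex $y$ and $\gamma\in F$ viewed as a loop at $x_0$, $\gamma.y$ is the endpoint of the unique lift of $\gamma$ starting at $y$; concretely, $\alpha_i$ sends $u$ to $v$ when there is an edge labelled $\alpha_i$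 oriented from $u$ to $v$. *)

From mathcomp Require Import all_boot all_fingroup.
Set Implicit Arguments. Unset Strict Implicit. Unset Printing Implicit Defensive.

(* A finite graph together with a combinatorial map to the rose X with r petals,
   i.e. an orientation (src/tgt) and a labelling of the edges by alpha_1..alpha_r
   (labels are 'I_r). *)
Record lgraph (r : nat) := LGraph {
  vert : finType;
  edge : finType;
  src : edge -> vert;
  tgt : edge -> vert;
  lab : edge -> 'I_r }.

Arguments src {r G} e : rename.
Arguments tgt {r G} e : rename.
Arguments lab {r G} e : rename.

Definition immersion r (G : lgraph r) : Prop :=
  (forall e1 e2 : edge G, src e1 = src e2 -> lab e1 = lab e2 -> e1 = e2) /\
  (forall e1 e2 : edge G, tgt e1 = tgt e2 -> lab e1 = lab e2 -> e1 = e2).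

Definition covering r (G : lgraph r) : Prop :=
  forall (v : vert G) (i : 'I_r),
    (exists! e : edge G, src e = v /\ lab e = i) /\
    (exists! e : edge G, tgt e = v /\ lab e = i).

Definition adj r (G : lgraph r) : rel (vert G) := fun u v =>
  [exists e : edge G, ((src e == u) && (tgt e == v)) || ((src e == v) && (tgt e == u))].

Definition connected r (G : lgraph r) : Prop :=
  forall u v : vert G, connect (@adj r G) u v.

(* (f, g) embeds Z as a subgraph of Y, compatibly with the maps to X
   (so the map Z -> X factors as Z -> Y -> X). *)
Definition subgraph_emb r (Z Y : lgraph r) (f : vert Z -> vert Y) (g : edge Z -> edge Y) : Prop :=
  [/\ injective f, injective g,
      forall e, src (g e) = f (src e),
      forall e, tgt (g e) = f (tgt e) &
      forall e, lab (g e) = lab e].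

(* sigma : 'I_r -> {perm V(Y)} is the action of the generators alpha_i by path lifting:
   alpha_i sends u to v when there is an edge labelled alpha_i from u to v. *)
Definition lifting_action r (Y : lgraph r) (sigma : 'I_r -> {perm vert Y}) : Prop :=
  forall e : edge Y, sigma (lab e) (src e) = tgt e.

From Stdlib Require Import Lia.
From mathcomp Require Import all_boot all_fingroup zify.
Set Implicit Arguments. Unset Strict Implicit. Unset Printing Implicit Defensive.
Import GroupScope.

(* Extend the partial permutations of V(Z) read off the labels to permutations
   pi_i of V(Z), and pick a vertex a of Z with no outgoing alpha_{i0}-edge.  Add a
   cycle C of length (n+5)!+1 and a cycle D of length (n+4)!+1 (n = #V(Z)) that
   meet only in c0.  The label alpha_{i0} rotates C and acts as pi_{i0} on V(Z),
   except that the step a -> pi_{i0} a detours through the first vertex e0 of D;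
   a second label alpha_j rotates D and acts as pi_j on V(Z); every other label
   acts as pi_i.  All other cycles of alpha_{i0} (resp. alpha_j) are shorter than
   n+5 (resp. n+4), so the (n+5)!-th (resp. (n+4)!-th) power of that generator is
   the inverse rotation of C (resp. D).  The commutator of the two rotations is
   the 3-cycle through c0, the last vertex c_max of C and the last vertex w of D.
   Conjugating it along C shows that (w c)(w c0) lies in the group for every c
   in C.  As C together with w holds more than half of the vertices and the
   group is transitive, this spreads to (a b)(w c0) for all vertices a, b, so the
   group contains the alternating group; swapping two vertices of D in alpha_{i0}
   when needed makes that generator odd. *)

Lemma cards_meet2 (T : finType) (A B : {set T}) :
  #|T| + 2 <= #|A| + #|B| -> 1 < #|A :&: B|.
Proof.
rewrite -cardsUI => leAB; rewrite ltnNge; apply/negP => leI.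
by have := leq_trans leAB (leq_add (max_card (A :|: B)) leI); rewrite leq_add2l.
Qed.

Lemma perm_image_meet2 (T : finType) (U : {set T}) (g : {perm T}) :
  #|T| + 2 <= 2 * #|U| -> 1 < #|g @: U :&: U|.
Proof.
by move=> bigU; apply: cards_meet2; rewrite card_imset ?addnn -?mul2n //; exact: perm_inj.
Qed.

Section TpermCoset.
Variables (T : finType) (G : {group {perm T}}) (x0 y0 : T).
Local Notation t0 := (tperm x0 y0).

Lemma tperm_coset_parity p :
  (forall a b, a != b -> tperm a b * t0 \in G) ->
  (if odd_perm p then t0 * p else p) \in G.
Proof.
move=> Gt; have [ts -> dts] := prod_tpermP p; rewrite odd_perm_prod //.
elim: ts dts => [|[a b] ts IHts] /=; first by rewrite big_nil group1.
case/andP=> ab /IHts; rewrite big_cons /=.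
have Gab := Gt a b ab; set P := \prod_(_ <- ts) _.
case: (odd (size ts)) => /= GP.
  by rewrite -(mulKg t0 P) tpermV mulgA groupM.
by rewrite mulgA -(tpermV x0 y0) -(tpermV a b) -invMg groupM ?groupV.
Qed.

Lemma Sym_of_tperm_coset :
  (forall a b, a != b -> tperm a b * t0 \in G) ->
  (exists2 o, o \in G & odd_perm o) -> G :=: [set: {perm T}].
Proof.
move=> Gt [o Go odd_o].
have Gt0 : t0 \in G.
  have := tperm_coset_parity o Gt; rewrite odd_o -{2}(mulgK o t0) => /groupM->//.
  by rewrite groupV.
apply/setP=> p; rewrite inE; have := tperm_coset_parity p Gt.
by case: (odd_perm p) => //; rewrite groupMl.
Qed.

Definition tlinked a b := (a == b) || (tperm a b * t0 \in G).

Lemma tlinked_sym a b : tlinked a b -> tlinked b a.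
Proof. by rewrite /tlinked eq_sym tpermC. Qed.

Lemma tlinked_trans a b c : tlinked a b -> tlinked b c -> tlinked a c.
Proof.
rewrite /tlinked; have [->|ab] := eqVneq a b => //=.
have [->|bc] := eqVneq b c => /=; first by move->; rewrite orbT.
have [//|ac] := eqVneq a c => /= Gab Gbc.
have -> : tperm a c = tperm a b * tperm b c * tperm a b.
  by rewrite -{1}(tpermV a b) -mulgA -conjgE tpermJ tpermR tpermD.
have := groupM (groupM Gab (groupVr Gbc)) Gab.
by rewrite invMg !tpermV -!mulgA (mulgA t0) tperm2 mul1g.
Qed.

Lemma tlinked_conj g a b : g \in G -> tperm (g x0) (g y0) * t0 \in G ->
  tlinked a b -> tlinked (g a) (g b).
Proof.
move=> Gg Ggt /orP[/eqP->|Gab]; first by rewrite /tlinked eqxx.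
apply/orP; right; have := groupM (groupJ Gab Gg) Ggt.
by rewrite conjMg !tpermJ -mulgA (mulgA (tperm (g x0) _)) tperm2 mul1g.
Qed.

Lemma tperm_orbit_coset c t : c \in G -> c x0 = x0 ->
  tperm x0 (c^-1 y0) * t0 \in G -> tperm x0 ((c ^+ t) y0) * t0 \in G.
Proof.
move=> Gc cx0 Gt1.
have step k : tperm x0 ((c ^+ k) y0) * tperm x0 ((c ^+ k.+1) y0) \in G.
  have := groupJ Gt1 (groupX k.+1 Gc).
  by rewrite conjMg !tpermJ permX_fix // expgS permM permKV.
elim: t => [|t IHt]; first by rewrite expg0 perm1 tperm2 group1.
have := groupM (groupVr (step t)) IHt.
by rewrite invMg -mulgA mulKg tpermV.
Qed.

Lemma tperm_image_coset (U : {set T}) g :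
  {in U, forall u, tlinked x0 u} -> #|T| + 2 <= 2 * #|U| ->
  g \in G -> tperm (g x0) (g y0) * t0 \in G.
Proof.
move=> linkU bigU Gg.
have /card_gt1P := perm_image_meet2 g bigU.
case=> _ [_ [/setIP[/imsetP[u Uu ->] Ugu] /setIP[/imsetP[v Uv ->] Ugv]]].
rewrite (inj_eq perm_inj) => uv.
have linked x y : x \in U -> y \in U -> x != y -> tperm x y * t0 \in G.
  move=> Ux Uy xy; have := tlinked_trans (tlinked_sym (linkU x Ux)) (linkU y Uy).
  by rewrite /tlinked (negbTE xy).
have := groupM (groupVr (groupJ (linked u v Uu Uv uv) Gg)) (linked _ _ Ugu Ugv _).
rewrite conjMg !tpermJ invMg -mulgA mulKg tpermV; apply.
by rewrite (inj_eq perm_inj).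
Qed.

(* Two images of a set holding more than half of the points share two points,
   which carries the links of U to the whole orbit of x0. *)
Lemma Sym_of_tlinked_majority (U : {set T}) :
  {in U, forall u, tlinked x0 u} -> #|T| + 2 <= 2 * #|U| ->
  (forall v, exists2 g, g \in G & g x0 = v) ->
  (exists2 o, o \in G & odd_perm o) -> G :=: [set: {perm T}].
Proof.
move=> linkU bigU trans odd_G; apply: Sym_of_tperm_coset odd_G => a b ab.
have orbit_linked g : g \in G -> tlinked x0 (g x0).
  move=> Gg; have Ggt := tperm_image_coset linkU bigU Gg.
  have /card_gt0P[_ /setIP[/imsetP[u Uu ->] Ugu]] := ltnW (perm_image_meet2 g bigU).
  apply: tlinked_trans (linkU _ Ugu) (tlinked_sym _).
  exact: tlinked_conj Gg Ggt (linkU u Uu).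
have [ga Gga ga_a] := trans a; have [gb Ggb gb_b] := trans b.
have := tlinked_trans (tlinked_sym (orbit_linked _ Gga)) (orbit_linked _ Ggb).
by rewrite /tlinked ga_a gb_b (negbTE ab).
Qed.

End TpermCoset.

Section PartialInjection.
Variables (T : finType) (p : T -> option T).
Hypothesis p_inj : forall x y z, p x = Some z -> p y = Some z -> x = y.

Lemma odflt_inj_in :
  {in [set x | p x != None] &, injective (fun x => odflt x (p x))}.
Proof.
move=> x y; rewrite !inE; case px: (p x) => [u|] //; case py: (p y) => [v|] //= _ _ uv.
by apply: p_inj px _; rewrite py uv.
Qed.

Lemma partial_inj_fresh a : p a = None -> exists b, forall x, p x != Some b.
Proof.
move=> pa; pose D := [set x | p x != None].
have ltD : #|D| < #|T|.
  rewrite -cardsT; apply: proper_card; rewrite properT.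
  by apply/eqP => /setP/(_ a); rewrite !inE pa.
have [b Db] : exists b, b \notin [set odflt x (p x) | x in D].
  apply/existsP; rewrite -negb_forall; apply: contraL ltD => /forallP allD.
  rewrite -leqNgt -(card_in_imset odflt_inj_in) -cardsT subset_leq_card //.
  by apply/subsetP => x _; exact: allD.
exists b => x; apply: contra Db => /eqP pxb.
by apply/imsetP; exists x; rewrite ?inE pxb.
Qed.

End PartialInjection.

Lemma partial_inj_perm (T : finType) (p : T -> option T) :
  (forall x y z, p x = Some z -> p y = Some z -> x = y) ->
  exists s : {perm T}, forall x z, p x = Some z -> s x = z.
Proof.
have [k] := ubnP #|[set x | p x == None]|; elim: k p => // k IHk p le_k p_inj.
have [a /eqP pa|total] := pickP [pred x | p x == None]; last first.
  have f_inj : injective (fun x => odflt x (p x)).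
    by move=> x y; apply: odflt_inj_in; rewrite // inE; apply/negbT; exact: total.
  by exists (perm f_inj) => x z pxz; rewrite permE pxz.
have [b new_b] := partial_inj_fresh p_inj pa.
pose p' x := if x == a then Some b else p x.
have le_k' : #|[set x | p' x == None]| < k.
  rewrite -ltnS (leq_trans _ le_k) // ltnS; apply: proper_card; apply/properP; split.
    by apply/subsetP=> x; rewrite !inE /p'; case: (x == a).
  by exists a; rewrite !inE /p' ?eqxx ?pa.
have p'_inj x y z : p' x = Some z -> p' y = Some z -> x = y.
  rewrite /p'; case: (x =P a) => [->|_]; case: (y =P a) => [->|_] //; last exact: p_inj.
  + by move=> [<-] pyb; have := new_b y; rewrite pyb eqxx.
  + by move=> pxz [zb]; have := new_b x; rewrite pxz zb eqxx.
have [s sp'] := IHk p' le_k' p'_inj.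
exists s => x z pxz; apply: sp'; rewrite /p'; case: eqP => // xa.
by rewrite xa pa in pxz.
Qed.

Lemma permX_fact_fix (T : finType) (s : {perm T}) (W : {set T}) v k :
  v \in W -> {in W, forall u, s u \in W} -> #|W| <= k -> (s ^+ k`!) v = v.
Proof.
move=> Wv sW leWk.
have orbitW : porbit s v \subset W.
  apply/subsetP=> _ /porbitP[i ->]; elim: i => [|i IHi]; first by rewrite expg0 perm1.
  by rewrite expgSr permM sW.
have /dvdnP[l ->] : #|porbit s v| %| k`!.
  rewrite dvdn_fact // lt0n card_porbit_neq0 /=.
  exact: leq_trans (subset_leq_card orbitW) leWk.
by rewrite mulnC expgM permX_fix // permX iter_porbit.
Qed.

Lemma permX_equivariant (T : finType) (U : Type) (s : {perm T}) (d : U -> T)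
    (f : U -> U) :
  (forall i, s (d i) = d (f i)) -> forall t i, (s ^+ t) (d i) = d (iter t f i).
Proof.
move=> sd; elim=> [|t IHt] i; first by rewrite expg0 perm1.
by rewrite expgSr permM IHt sd.
Qed.

Lemma exists_ord_neq n (i : 'I_n) : 1 < n -> exists j : 'I_n, j != i.
Proof.
move=> n_gt1; pose o0 := Ordinal (ltnW n_gt1).
have [->|i_o0] := eqVneq i o0; first by exists (Ordinal n_gt1).
by exists o0; rewrite eq_sym.
Qed.

Lemma val_iter_ordS n (i : 'I_n) t : iter t (@ordS n) i = (i + t) %% n :> nat.
Proof.
elim: t => [|t IHt]; first by rewrite addn0 modn_small.
by rewrite iterS /= IHt -addn1 modnDml addn1 addnS.
Qed.

Lemma iter_ordS_id n (i : 'I_n) : iter n (@ordS n) i = i.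
Proof. by apply: ord_inj; rewrite val_iter_ordS modnDr modn_small. Qed.

Lemma iter_ordS_ord0 n (i : 'I_n.+1) : iter i (@ordS _) ord0 = i.
Proof. by apply: ord_inj; rewrite val_iter_ordS add0n modn_small. Qed.

Lemma ordS_eq0 n (i : 'I_n.+1) : (ordS i == ord0) = (i == ord_max).
Proof.
apply/eqP/eqP=> [/(congr1 val)/= iS0|->]; apply: val_inj => /=; last exact: modnn.
have := ltn_ord i; rewrite ltnS leq_eqVlt => /predU1P[//|lt_in].
by rewrite modn_small in iS0.
Qed.

Lemma ordS_max n : ordS (@ord_max n) = ord0.
Proof. by apply/eqP; rewrite ordS_eq0. Qed.

Lemma ordS_ord0 n : ordS (@ord0 n.+1) = lift ord0 ord0.
Proof. by apply: ord_inj; rewrite /= modn_small. Qed.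

Lemma ordS_lift0_max n : ordS (lift ord0 (@ord_max n)) = ord0.
Proof. by apply/eqP; rewrite ordS_eq0; apply/eqP/ord_inj. Qed.

Lemma ordS_lift0 n (k : 'I_n.+1) :
  k != ord_max -> ordS (lift ord0 k) = lift ord0 (ordS k).
Proof.
move=> kmax; have ltkn : k < n.
  rewrite ltn_neqAle -ltnS ltn_ord andbT.
  by apply: contra kmax => /eqP kn; apply/eqP/ord_inj.
by apply: ord_inj; rewrite /= /bump /= !add1n !modn_small // !ltnS.
Qed.

Section SumPerm.
Variables A B : finType.

Definition sum_fun (sA : {perm A}) (sB : {perm B}) (v : A + B) : A + B :=
  match v with inl a => inl (sA a) | inr b => inr (sB b) end.

Lemma sum_fun_inj sA sB : injective (sum_fun sA sB).
Proof.
by apply: (can_inj (g := sum_fun sA^-1 sB^-1)) => [[a|b]] /=; rewrite permK.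
Qed.

Definition sum_perm sA sB : {perm A + B} := perm (@sum_fun_inj sA sB).

End SumPerm.

Definition rot_perm n : {perm 'I_n} := perm (@ordS_inj n).

Section PermGraph.
Variables (r : nat) (V : finType) (sigma : 'I_r -> {perm V}).

Definition perm_graph : lgraph r :=
  @LGraph r V (V * 'I_r)%type fst (fun e => sigma e.2 e.1) snd.

Local Notation adjY := (@adj r perm_graph).

Lemma perm_graph_covering : covering perm_graph.
Proof.
move=> v i; split; first by exists (v, i); split=> // [[u k]] /= [-> ->].
exists ((sigma i)^-1 v, i); split=> [|[u k] /= [<- ->]]; last by rewrite permK.
by rewrite /= permKV.
Qed.

Lemma perm_graph_adj u i : adjY u (sigma i u).
Proof. by apply/existsP; exists (u, i); rewrite !eqxx. Qed.

Lemma perm_graph_adj_sym : symmetric adjY.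
Proof. by move=> u v; apply/existsP/existsP=> -[e adj_e]; exists e; rewrite orbC. Qed.

Lemma perm_graph_connectX u i t : connect adjY u ((sigma i ^+ t) u).
Proof.
elim: t => [|t IHt]; first by rewrite expg0 perm1 connect0.
by rewrite expgSr permM (connect_trans IHt) // connect1 // perm_graph_adj.
Qed.

Lemma perm_graph_connect_map (Z : lgraph r) (f : vert Z -> V) x y :
  (forall e, sigma (lab e) (f (src e)) = f (tgt e)) ->
  connect (@adj r Z) x y -> connect adjY (f x) (f y).
Proof.
move=> f_edge /connectP[s + ->] {y}.
elim: s x => [|y s IHs] x /=; first by rewrite connect0.
case/andP=> /existsP[e /orP[]/andP[/eqP<- /eqP<-]] /IHs.
all: apply: connect_trans; apply: connect1.
  by rewrite -f_edge perm_graph_adj.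
by rewrite perm_graph_adj_sym -f_edge perm_graph_adj.
Qed.

Lemma perm_graph_subgraph (Z : lgraph r) (f : vert Z -> V) :
  injective f -> immersion Z -> (forall e, sigma (lab e) (f (src e)) = f (tgt e)) ->
  @subgraph_emb r Z perm_graph f (fun e => (f (src e), lab e)).
Proof.
move=> f_inj Zimm f_edge; split=> // e1 e2 [/f_inj s12 l12].
exact: Zimm.1.
Qed.

Lemma perm_graph_transitive : connected perm_graph ->
  forall u v, exists2 g, g \in <<[set sigma i | i : 'I_r]>> & g u = v.
Proof.
move=> connY u v; have /connectP[p] := connY u v.
elim: p u => [|y p IHp] u /=; first by exists 1; rewrite ?group1 ?perm1.
case/andP=> /existsP[[z i] /= adj_uy] /IHp {}IHp /IHp[g Gg <-].
have Gs : sigma i \in <<[set sigma i | i : 'I_r]>> by rewrite mem_gen ?imset_f.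
case/orP: adj_uy => /andP[/eqP<- /eqP<-].
  by exists (sigma i * g); rewrite ?groupM // permM.
by exists ((sigma i)^-1 * g); rewrite ?groupM ?groupV // permM permK.
Qed.

End PermGraph.

Section ImmersionLabels.
Variables (r : nat) (Z : lgraph r).
Hypothesis Zimm : immersion Z.

Lemma immersion_label_perm :
  exists pi : 'I_r -> {perm vert Z}, forall e, pi (lab e) (src e) = tgt e.
Proof.
suff /fin_all_exists[pi pi_e] : forall i, exists s : {perm vert Z},
    forall e, lab e = i -> s (src e) = tgt e.
  by exists pi => e; apply: pi_e.
move=> i; pose p z := omap (@tgt r Z) [pick e | (src e == z) && (lab e == i)].
have pP z u : p z = Some u -> exists e, [/\ src e = z, lab e = i & tgt e = u].
  by rewrite /p; case: pickP => //= e /andP[/eqP se /eqP le] [<-]; exists e.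
have [|s sp] := partial_inj_perm (p := p).
  move=> x y u /pP[e1 [<- l1 <-]] /pP[e2 [<- l2 te]].
  by rewrite (Zimm.2 e1 e2) // l1 l2.
exists s => e le; apply: sp; rewrite /p; case: pickP => [e' /andP[/eqP se /eqP le']|].
  by rewrite (Zimm.1 e' e) // le le'.
by move/(_ e); rewrite le !eqxx.
Qed.

Lemma not_covering_missing_edge (pi : 'I_r -> {perm vert Z}) :
  (forall e, pi (lab e) (src e) = tgt e) -> ~ covering Z ->
  exists (i : 'I_r) (a : vert Z), forall e : edge Z, src e = a -> lab e != i.
Proof.
move=> pi_e ncov.
case: (boolP [exists i : 'I_r, exists a : vert Z,
                [forall e : edge Z, (src e == a) ==> (lab e != i)]]).
  case/existsP=> i /existsP[a /forallP a_out]; exists i, a => e sea.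
  by apply: (implyP (a_out e)); rewrite sea.
rewrite negb_exists => /forallP full; case: ncov => v i.
have out (u : vert Z) : exists e : edge Z, src e = u /\ lab e = i.
  move: (full i); rewrite negb_exists => /forallP/(_ u).
  rewrite negb_forall => /existsP[e].
  by rewrite negb_imply negbK => /andP[/eqP se /eqP le]; exists e.
split.
  have [e [se le]] := out v; exists e; split=> // e' [se' le'].
  by apply: Zimm.1; rewrite ?se ?se' ?le ?le'.
have [e [se le]] := out ((pi i)^-1 v).
have te : tgt e = v by rewrite -pi_e se le permKV.
exists e; split=> // e' [te' le'].
by apply: Zimm.2; rewrite ?te ?te' ?le ?le'.
Qed.

End ImmersionLabels.

Section Construction.
Variables (r : nat) (Z : lgraph r) (pi : 'I_r -> {perm vert Z}).
Hypothesis pi_edge : forall e, pi (lab e) (src e) = tgt e.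
Variables (i0 j : 'I_r) (a : vert Z).
Hypothesis a_no_i0 : forall e, src e = a -> lab e != i0.
Hypothesis j_neq_i0 : j != i0.

(* C is 'I_q.+2 with c0 = ord0; the D-cycle is c0 followed by 'I_p.+3,
   from e0 = ord0 to w = ord_max. *)
Let n := #|vert Z|.
Let q := ((n + 5)`!).-1.
Let p := (n + 4)`! - 3.

Lemma q_fact : q.+1 = (n + 5)`!.
Proof. by rewrite prednK ?fact_gt0. Qed.

Lemma p_fact : p.+3 = (n + 4)`!.
Proof.
rewrite -addn3 subnK // (leq_trans _ (leq_fact (_ : 4 <= n + 4))) //.
by rewrite leq_addl.
Qed.

Definition vertY : finType := (vert Z + ('I_q.+2 + 'I_p.+3))%type.

Local Notation vz z := (inl z : vertY).
Local Notation cc i := (inr (inl i) : vertY).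
Local Notation dd k := (inr (inr k) : vertY).
Local Notation c0 := (cc ord0).
Local Notation cmax := (cc ord_max).
Local Notation e0 := (dd ord0).
Local Notation w := (dd ord_max).
Local Notation d1 := (dd (Ordinal (isT : 1 < p.+3))).
Local Notation d2 := (dd (Ordinal (isT : 2 < p.+3))).

Lemma vz_eq x y : (vz x == vz y) = (x == y).
Proof. by apply/eqP/eqP => [[]|->]. Qed.

Lemma cc_eq x y : (cc x == cc y) = (x == y).
Proof. by apply/eqP/eqP => [[]|->]. Qed.

Lemma dd_eq x y : (dd x == dd y) = (x == y).
Proof. by apply/eqP/eqP => [[]|->]. Qed.

Definition lift_Z (s : {perm vert Z}) : {perm vertY} := sum_perm s 1.
Definition cycC : {perm vertY} := sum_perm 1 (sum_perm (rot_perm _) 1).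
Definition cycD : {perm vertY} := sum_perm 1 (sum_perm 1 (rot_perm _)) * tperm c0 e0.

Lemma lift_ZE s v : lift_Z s v = if v is inl z then vz (s z) else v.
Proof. by case: v => [z|[i|k]]; do ?rewrite permE /=. Qed.

Lemma cycCE v : cycC v = if v is inr (inl i) then cc (ordS i) else v.
Proof. by case: v => [z|[i|k]]; do ?rewrite permE /=. Qed.

Lemma cycC_cc i : cycC (cc i) = cc (ordS i).
Proof. by rewrite cycCE. Qed.

Lemma cycDE v : cycD v = tperm c0 e0 (if v is inr (inr k) then dd (ordS k) else v).
Proof.
by rewrite permM; congr (tperm _ _ _); case: v => [z|[i|k]]; do ?rewrite permE /=.
Qed.

Lemma cycD_c0 : cycD c0 = e0.
Proof. by rewrite cycDE tpermL. Qed.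

Lemma cycD_w : cycD w = c0.
Proof. by rewrite cycDE ordS_max tpermR. Qed.

Lemma cycD_dd k : k != ord_max -> cycD (dd k) = dd (ordS k).
Proof. by move=> kmax; rewrite cycDE tpermD // dd_eq eq_sym ordS_eq0. Qed.

Lemma cycD_cc i : i != ord0 -> cycD (cc i) = cc i.
Proof. by move=> inz; rewrite cycDE tpermD // cc_eq eq_sym. Qed.

Lemma cycD_vz z : cycD (vz z) = vz z.
Proof. by rewrite cycDE tpermD. Qed.

Lemma commutator_cycC_cycD :
  cycC * cycD * cycC^-1 * cycD^-1 = tperm w cmax * tperm w c0.
Proof.
suff -> : cycC * cycD = tperm w cmax * tperm w c0 * cycD * cycC by rewrite !mulgK.
apply/permP => v.
rewrite (permM cycC) (permM _ cycC) (permM _ cycD) (permM (tperm w cmax)).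
case: v => [z|[i|k]].
- by rewrite !tpermD // cycD_vz !cycCE /= cycD_vz.
- have [->|imax] := eqVneq i ord_max.
    by rewrite tpermR tpermL cycD_c0 !cycCE /= ordS_max cycD_c0.
  have [->|inz] := eqVneq i ord0.
    rewrite [tperm w cmax c0]tpermD // tpermR cycD_w !cycCE /=.
    by rewrite cycD_cc // ordS_eq0.
  by rewrite !tpermD ?cc_eq 1?eq_sym // cycD_cc // !cycCE /= cycD_cc // ordS_eq0.
- have [->|kmax] := eqVneq k ord_max.
    by rewrite tpermL tpermD // cycD_cc // !cycCE /= ordS_max cycD_w.
  by rewrite !tpermD ?dd_eq 1?eq_sym // cycD_dd // !cycCE /= cycD_dd.
Qed.

Definition s0base := lift_Z (pi i0) * cycC * tperm (vz (pi i0 a)) e0.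
(* Harmless for s0 ^+ (n + 5)`!, as (n + 5)`! is even. *)
Definition parity_fix : {perm vertY} := if odd_perm s0base then 1 else tperm d1 d2.
Definition s0 := s0base * parity_fix.
Definition sj := lift_Z (pi j) * cycD.
Definition sigma i := if i == i0 then s0 else if i == j then sj else lift_Z (pi i).

Lemma s0_odd : odd_perm s0.
Proof.
rewrite /s0 odd_permM /parity_fix.
by case: (odd_perm s0base); rewrite ?odd_perm1 ?odd_tperm.
Qed.

Lemma parity_fix_out v : v != d1 -> v != d2 -> parity_fix v = v.
Proof. by rewrite /parity_fix; case: ifP => _ *; rewrite ?perm1 // tpermD // eq_sym. Qed.

Lemma s0E v :
  s0 v = parity_fix (tperm (vz (pi i0 a)) e0 (cycC (lift_Z (pi i0) v))).
Proof. by rewrite !permM. Qed.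

Lemma s0_vz z : z != a -> s0 (vz z) = vz (pi i0 z).
Proof.
move=> za; rewrite s0E lift_ZE cycCE /= tpermD ?parity_fix_out //.
by rewrite vz_eq (inj_eq perm_inj) eq_sym.
Qed.

Lemma s0_a : s0 (vz a) = e0.
Proof. by rewrite s0E lift_ZE cycCE /= tpermL parity_fix_out. Qed.

Lemma s0_e0 : s0 e0 = vz (pi i0 a).
Proof. by rewrite s0E lift_ZE cycCE /= tpermR parity_fix_out. Qed.

Lemma s0_cc i : s0 (cc i) = cc (ordS i).
Proof. by rewrite s0E lift_ZE cycCE /= tpermD ?parity_fix_out. Qed.

Lemma s0_dd k : k != ord0 -> s0 (dd k) = parity_fix (dd k).
Proof. by move=> knz; rewrite s0E lift_ZE cycCE /= tpermD // dd_eq eq_sym. Qed.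

Lemma sj_vz z : sj (vz z) = vz (pi j z).
Proof. by rewrite permM lift_ZE cycD_vz. Qed.

Lemma sigma_edge e : sigma (lab e) (vz (src e)) = vz (tgt e).
Proof.
rewrite /sigma; case: eqP => [le|_].
  rewrite s0_vz -?le ?pi_edge //; apply/eqP => /a_no_i0.
  by rewrite le eqxx.
case: eqP => [lj|_]; first by rewrite sj_vz -lj pi_edge.
by rewrite lift_ZE pi_edge.
Qed.

Lemma s0X_cycC : s0 ^+ q.+1 * cycC = 1.
Proof.
pose W := e0 |: (d1 |: (d2 |: [set vz z | z : vert Z])).
have s0W : {in W, forall u, s0 u \in W}.
  move=> u; rewrite !inE => /or4P[/eqP->|/eqP->|/eqP->|/imsetP[z _ ->]].
  - by rewrite s0_e0 imset_f ?orbT.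
  - by rewrite s0_dd // /parity_fix; case: ifP; rewrite ?perm1 ?tpermL eqxx !orbT.
  - by rewrite s0_dd // /parity_fix; case: ifP; rewrite ?perm1 ?tpermR eqxx !orbT.
  have [->|za] := eqVneq z a; first by rewrite s0_a eqxx.
  by rewrite s0_vz // imset_f ?orbT.
have cardW : #|W| <= n + 5.
  have := leq_imset_card (fun z : vert Z => vz z) (vert Z).
  by rewrite !cardsU1 -/n; do 3!case: (_ \notin _); rewrite /=; lia.
have s0XW u : u \in W -> (s0 ^+ q.+1) u = u.
  by move=> Wu; have := permX_fact_fix Wu s0W cardW; rewrite -q_fact.
apply/permP => v; rewrite permM perm1.
case: v => [z|[i|k]].
- by rewrite s0XW ?cycCE // !inE imset_f ?orbT.
- rewrite (permX_equivariant s0_cc) cycC_cc.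
  by rewrite -[ordS _]/(iter q.+2 _ i) iter_ordS_id.
have [kW|kW] := boolP (dd k \in W); first by rewrite s0XW ?cycCE.
move: kW; rewrite !inE !dd_eq => /norP[k0 /norP[k1 /norP[k2 _]]].
by rewrite permX_fix ?cycCE // s0_dd ?parity_fix_out ?dd_eq.
Qed.

Definition delta (i : 'I_p.+4) : vertY :=
  if unlift ord0 i is Some k then dd k else c0.

Lemma delta_lift k : delta (lift ord0 k) = dd k.
Proof. by rewrite /delta liftK. Qed.

Lemma cycD_delta i : cycD (delta i) = delta (ordS i).
Proof.
rewrite /delta; case: unliftP => [k ->|->]; last by rewrite cycD_c0 ordS_ord0 liftK.
have [->|kmax] := eqVneq k ord_max; first by rewrite cycD_w ordS_lift0_max unlift_none.
by rewrite cycD_dd // ordS_lift0 // liftK.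
Qed.

Lemma sj_delta i : sj (delta i) = delta (ordS i).
Proof.
rewrite permM -cycD_delta; congr (cycD _).
by rewrite lift_ZE /delta; case: unlift.
Qed.

Lemma sjX_cycD : sj ^+ p.+3 * cycD = 1.
Proof.
have cycle i : cycD ((sj ^+ p.+3) (delta i)) = delta i.
  rewrite (permX_equivariant sj_delta) cycD_delta.
  by rewrite -[ordS _]/(iter p.+4 _ i) iter_ordS_id.
pose W := [set vz z | z : vert Z].
have sjW : {in W, forall u, sj u \in W}.
  by move=> _ /imsetP[z _ ->]; rewrite sj_vz imset_f.
have cardW : #|W| <= n + 4 by rewrite (leq_trans (leq_imset_card _ _)) ?leq_addr.
apply/permP => v; rewrite permM perm1.
case: v => [z|[i|k]].
- have := permX_fact_fix (_ : vz z \in W) sjW cardW.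
  by rewrite -p_fact => ->; rewrite ?cycD_vz // imset_f.
- have [->|inz] := eqVneq i ord0; first by have := cycle ord0; rewrite /delta unlift_none.
  by rewrite permX_fix ?cycD_cc // permM lift_ZE cycD_cc.
- by have := cycle (lift ord0 k); rewrite delta_lift.
Qed.

Local Notation Gsigma := (<<[set sigma i | i : 'I_r]>>%G).

Lemma s0_in : s0 \in Gsigma.
Proof. by rewrite (_ : s0 = sigma i0) ?mem_gen ?imset_f // /sigma eqxx. Qed.

Lemma sj_in : sj \in Gsigma.
Proof.
by rewrite (_ : sj = sigma j) ?mem_gen ?imset_f // /sigma (negbTE j_neq_i0) eqxx.
Qed.

Lemma cycC_in : cycC \in Gsigma.
Proof. by rewrite -(mulKg (s0 ^+ q.+1) cycC) s0X_cycC mulg1 groupV groupX ?s0_in. Qed.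

Lemma cycD_in : cycD \in Gsigma.
Proof. by rewrite -(mulKg (sj ^+ p.+3) cycD) sjX_cycD mulg1 groupV groupX ?sj_in. Qed.

Lemma tperm_w_cc_coset i : tperm w (cc i) * tperm w c0 \in Gsigma.
Proof.
have cycC_c0 : cycC^-1 c0 = cmax.
  by apply: (@perm_inj _ cycC); rewrite permKV cycCE /= ordS_max.
have Gcomm : tperm w (cycC^-1 c0) * tperm w c0 \in Gsigma.
  rewrite cycC_c0 -commutator_cycC_cycD.
  exact: groupM (groupM (groupM cycC_in cycD_in) (groupVr cycC_in)) (groupVr cycD_in).
have := tperm_orbit_coset i cycC_in (_ : cycC w = w) Gcomm.
by rewrite (permX_equivariant cycC_cc) iter_ordS_ord0; apply; rewrite cycCE.
Qed.

Lemma card_vertY : #|vertY| + 2 <= 2 * #|w |: [set cc i | i : 'I_q.+2]|.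
Proof.
rewrite cardsU1 card_imset; last by move=> x y [].
rewrite (_ : w \notin _) ?card_sum ?card_ord; last by apply/imsetP => -[].
have := q_fact; rewrite addnS factS -p_fact -/n => qE; nia.
Qed.

Hypothesis Zconn : connected Z.

Lemma perm_graph_sigma_connected : connected (perm_graph sigma).
Proof.
pose adjY := @adj r (perm_graph sigma).
have Ysym : connect_sym adjY by apply: sym_connect_sym; exact: perm_graph_adj_sym.
suff from_c0 v : connect adjY c0 v.
  by move=> u v; rewrite (connect_trans _ (from_c0 v)) // Ysym.
have sigma_i0 : sigma i0 = s0 by rewrite /sigma eqxx.
have sigma_j : sigma j = sj by rewrite /sigma (negbTE j_neq_i0) eqxx.
have from_delta i : connect adjY c0 (delta i).
  have := perm_graph_connectX (sigma := sigma) c0 j i.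
  rewrite sigma_j {2}(_ : c0 = delta ord0) ?(permX_equivariant sj_delta) //.
    by rewrite iter_ordS_ord0.
  by rewrite /delta unlift_none.
case: v => [z|[i|k]].
- apply: connect_trans (from_delta (lift ord0 ord0)) _; rewrite delta_lift -s0_a.
  apply: connect_trans (perm_graph_connect_map sigma_edge (Zconn a z)).
  by rewrite connect1 // perm_graph_adj_sym -sigma_i0 perm_graph_adj.
- have := perm_graph_connectX (sigma := sigma) c0 i0 i.
  by rewrite sigma_i0 (permX_equivariant s0_cc) iter_ordS_ord0.
- by rewrite -delta_lift.
Qed.

Lemma sigma_generates : <<[set sigma i | i : 'I_r]>> = [set: {perm vertY}].
Proof.
apply: (Sym_of_tlinked_majority (x0 := w) (y0 := c0)) card_vertY _ _.
- move=> u; rewrite !inE => /predU1P[->|/imsetP[i _ ->]]; first by rewrite /tlinked eqxx.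
  by rewrite /tlinked tperm_w_cc_coset orbT.
- exact: perm_graph_transitive perm_graph_sigma_connected w.
- by exists s0; [exact: s0_in | exact: s0_odd].
Qed.

End Construction.

Theorem lemma3p4 (r : nat) (hr : 2 <= r) (Z : lgraph r) :
  0 < #|vert Z| -> connected Z -> immersion Z -> ~ covering Z ->
  exists Y : lgraph r,
    [/\ connected Y, covering Y,
        (exists (f : vert Z -> vert Y) (g : edge Z -> edge Y), subgraph_emb f g) &
        exists sigma : 'I_r -> {perm vert Y},
          lifting_action sigma /\
          <<[set sigma i | i : 'I_r]>>%g = [set: {perm vert Y}]].
Proof.
move=> _ Zconn Zimm ncov.
have [pi pi_edge] := immersion_label_perm Zimm.
have [i0 [a a_no_i0]] := not_covering_missing_edge Zimm pi_edge ncov.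
have [j j_neq_i0] := exists_ord_neq i0 hr.
exists (perm_graph (sigma pi i0 j a)); split.
- exact: (perm_graph_sigma_connected pi_edge a_no_i0 j_neq_i0 Zconn).
- exact: perm_graph_covering.
- exists inl, (fun e => (inl (src e), lab e)).
  by apply: (perm_graph_subgraph _ Zimm (sigma_edge pi_edge j a_no_i0)) => x y [].
- exists (sigma pi i0 j a); split=> //.
  exact: (sigma_generates pi_edge a_no_i0 j_neq_i0 Zconn).
Qed.
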